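(* Let $k\ge 2$, $n=2k$, $\mathcal{N}=\{0,1,\dots,n-1\}$, and let $A,B,C$ be the sets of elements of $\mathcal{N}$ congruent to $0,1,2 \pmod 3$ respectively. Let $j\in\{0,1,2\}$ with $\sum_{t\in\mathcal{N}}t\equiv j\pmod 3$. Let $X$ be a $(k-1)$-subset of $\mathcal{N}$ with $A\not\subset X$, $B\not\subset X$ and $C\not\subset X$. Then $X\in\mathcal{D}(\mathcal{R}_i)$ for every $i\in\{0,1,2\}$ with $i\equiv 1-j\pmod 3$ or $i\equiv 2-j\pmod 3$; that is, for each such $i$ there exist $X',Y'\in\mathcal{R}_i$ with $X=X'\setminus Y'$.
   Context: For $i\in\{0,1,2\}$, $\mathcal{R}_i=\{\{x_1,\dots,x_k\}\in\binom{\mathcal{N}}{k} : x_1+\dots+x_k\equiv i \pmod 3\}$, where $\binom{\mathcal{N}}{k}$ is the family of $k$-element subsets of $\mathcal{N}$. For a family $\mathcal{F}$, $\mathcal{D}(\mathcal{F})=\{F\setminus F' : F,F'\in\mathcal{F}\}$. *)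

From mathcomp Require Import all_boot.
Set Implicit Arguments. Unset Strict Implicit. Unset Printing Implicit Defensive.

Definition Rfam (n k i : nat) : {set {set 'I_n}} :=
  [set F : {set 'I_n} | (#|F| == k) && ((\sum_(x in F) (x : nat)) %% 3 == i %% 3)].

Definition Dfam (n : nat) (F : {set {set 'I_n}}) : {set {set 'I_n}} :=
  [set X | [exists F1 in F, exists F2 in F, X == F1 :\: F2]].

Definition resid (n r : nat) : {set 'I_n} := [set x : 'I_n | x %% 3 == r].

From mathcomp Require Import all_boot.
From mathcomp Require Import zify.

Set Implicit Arguments.
Unset Strict Implicit.
Unset Printing Implicit Defensive.

(* Let x be the element sum of X, so that the complement of X sums to j - x
   mod 3.  Since no residue class mod 3 lies inside X, we can pick a outside X
   with a = i - x and b outside X with b = j - x - i (mod 3); a <> b because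
   i + j is not 0 mod 3.  Then X + a and (complement of X) - b are k-sets whose
   sums are i mod 3, and the first one minus the second one is X. *)

Lemma DfamP n (F : {set {set 'I_n}}) X :
  reflect (exists2 F1, F1 \in F & exists2 F2, F2 \in F & X = F1 :\: F2)
          (X \in Dfam F).
Proof.
rewrite inE; apply: (iffP exists_inP).
  by case=> F1 F1F /exists_inP[F2 F2F /eqP]; exists F1 => //; exists F2.
case=> F1 F1F [F2 F2F ->].
by exists F1 => //; apply/exists_inP; exists F2.
Qed.

Lemma exists_notin_mod3 n (X : {set 'I_n}) :
  (forall r, r < 3 -> ~~ (resid n r \subset X)) ->
  forall m, exists2 y : 'I_n, y \notin X & y = m %[mod 3].
Proof.
move=> notsub m; have /subsetPn[y] := notsub _ (ltn_pmod m (isT : 0 < 3)).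
by rewrite inE => /eqP ym yX; exists y.
Qed.

Lemma setU1_setD_setCD1 (T : finType) (X : {set T}) a b :
  a \notin X -> a != b -> X = (a |: X) :\: (~: X :\ b).
Proof.
move=> aX ab; apply/setP => t; rewrite !inE.
by case: (eqVneq t a) => [->|_]; rewrite ?(negbTE aX) ?ab //=; case: (t \in X); rewrite ?andbF.
Qed.

Lemma card_setCD1 (T : finType) (X : {set T}) b :
  b \notin X -> #|~: X :\ b| = (#|T| - #|X|).-1.
Proof.
by move=> bX; rewrite -(cardsC X) addKn (cardsD1 b (~: X)) inE bX add1n.
Qed.

Lemma sum_setC (T : finType) (X : {set T}) (F : T -> nat) :
  \sum_t F t = \sum_(t in X) F t + \sum_(t in ~: X) F t.
Proof.
rewrite (bigID (mem X)) /=; congr (_ + _).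
by apply: eq_bigl => t; rewrite inE.
Qed.

Lemma admissible_residue i j : j < 3 ->
  (i %% 3 == (1 + 3 - j) %% 3) || (i %% 3 == (2 + 3 - j) %% 3) ->
  i + j != 0 %[mod 3].
Proof. lia. Qed.

Lemma residue_of_rest i j x b s :
  (x + (b + s)) %% 3 = j -> b = j + 2 * (x + i) %[mod 3] -> s = i %[mod 3].
Proof. lia. Qed.

Theorem lemma2p1 (k : nat) (hk : 2 <= k) (j : nat) (hj : j < 3)
  (hsum : (\sum_(t < 2 * k) t) %% 3 = j)
  (X : {set 'I_(2 * k)}) (hX : #|X| = k.-1)
  (hA : ~~ (resid (2 * k) 0 \subset X))
  (hB : ~~ (resid (2 * k) 1 \subset X))
  (hC : ~~ (resid (2 * k) 2 \subset X)) :
  forall i : nat, i < 3 ->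
    (i %% 3 == (1 + 3 - j) %% 3) || (i %% 3 == (2 + 3 - j) %% 3) ->
    X \in Dfam (Rfam (2 * k) k i).
Proof.
move=> i _ /(admissible_residue hj) ij.
have outside : forall m, exists2 y : 'I_(2 * k), y \notin X & y = m %[mod 3].
  by apply: exists_notin_mod3 => -[|[|[|r]]].
set x := \sum_(t in X) (t : nat) in hsum *.
have [a aX a_mod] := outside (i + 2 * x).
have [b bX b_mod] := outside (j + 2 * (x + i)).
have ab : a != b by apply: contraNneq ij => ab_eq; move: a_mod b_mod; rewrite ab_eq; lia.
have bC : b \in ~: X by rewrite inE.
apply/DfamP; exists (a |: X); last exists (~: X :\ b).
- rewrite inE cardsU1 aX hX big_setU1 //= -/x; apply/andP; split; lia.
- rewrite inE card_setCD1 // card_ord hX; apply/andP; split; first lia.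
  rewrite (sum_setC X) (big_setD1 b bC) -/x in hsum.
  by apply/eqP; apply: residue_of_rest hsum b_mod.
- exact: setU1_setD_setCD1.
Qed.
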